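(* There exists an absolute constant $C_2>0$ such that for every $\delta_0>0$ the following holds: if $\|\mathcal T-\mathcal S\|_{\mathrm{op}}<\delta_0$ and $x\in\mathbb C^n$ satisfies $$8\frac{|\langle x,x^\natural\rangle|^2}{\|x^\natural\|^4}+\Big(4+\tfrac14\delta_0C_2\Big)\frac{\|x\|^2}{\|x^\natural\|^2}\le 4-\tfrac14\delta_0C_2,$$ then $(x^{\natural+})^TH_f(x^+)\,x^{\natural+}<0$, where $H_f$ is the Hessian of $f$ with respect to $x^+$.
   Context: Let $n,m\ge 1$, $a_1,\dots,a_m\in\mathbb C^n$ and $x^\natural\in\mathbb C^n$ with $x^\natural\neq0$. For $a,b\in\mathbb C^n$ write $\langle a,b\rangle=\sum_{j}a_j\overline{b_j}$ and let $\|\cdot\|$ be the Euclidean norm. Let $y_i=|\langle a_i,x^\natural\rangle|^2$. For $v\in\mathbb C^n$ put $v^+=(\mathrm{Re}\,v,\mathrm{Im}\,v)\in\mathbb R^{2n}$ and $v^-=(-\mathrm{Im}\,v,\mathrm{Re}\,v)$; $x$ and $x^+$ always correspond. Define $f:\mathbb R^{2n}\to\mathbb R$ by $f(x^+)=\sum_{i=1}^m\big(|\langle a_i,x\rangle|^2-y_i\big)^2$. Fix $\sigma>0$ (in the paper, $\sigma^2=\mathrm{Var}((a_i^+)_1)$ for random measurement vectors), set $c=m\sigma^4$. Define the order-4 tensors on $\mathbb R^{2n}$: $\mathcal T=\frac1c\sum_{i=1}^m(a_i^+)^{\otimes 4}$ and $\mathcal S_{i_1i_2i_3i_4}=\mathbf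 1_{i_1=i_2,\,i_3=i_4}+\mathbf 1_{i_1=i_3,\,i_2=i_4}+\mathbf 1_{i_1=i_4,\,i_2=i_3}$, and $\|\mathcal R\|_{\mathrm{op}}=\sup\{\langle \mathcal R,u_1\otimes u_2\otimes u_3\otimes u_4\rangle:\ u_j\in\mathbb R^{2n},\ \|u_1\|\|u_2\|\|u_3\|\|u_4\|=1\}$ (tensor inner product = sum of entrywise products). *)

From HB Require Import structures.
From mathcomp Require Import all_boot all_order all_algebra.
From mathcomp Require Import all_classical all_reals all_analysis.
From mathcomp Require Import complex.
Set Implicit Arguments.
Unset Strict Implicit.
Unset Printing Implicit Defensive.
Import Order.TTheory GRing.Theory Num.Theory.
Local Open Scope ring_scope.

Section PhaseRetrieval.
Variable R : realType.

Definition cmod (z : R[i]) : R := Normc.normc z.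

Definition cinner n (a b : 'I_n -> R[i]) : R[i] := \sum_(j < n) a j * conjc (b j).

Definition cnorm n (x : 'I_n -> R[i]) : R := Num.sqrt (\sum_(j < n) cmod (x j) ^+ 2).

Definition vplus n (v : 'I_n -> R[i]) : 'rV[R]_(n + n) :=
  \row_(k < n + n) match fintype.split k with inl j => complex.Re (v j) | inr j => complex.Im (v j) end.

Definition unplus n (u : 'rV[R]_(n + n)) : 'I_n -> R[i] :=
  fun j => Complex (u ord0 (lshift n j)) (u ord0 (rshift n j)).

Definition fobj n m (a : 'I_m -> 'I_n -> R[i]) (xnat : 'I_n -> R[i])
  (u : 'rV[R]_(n + n)) : R :=
  \sum_(i < m) (cmod (cinner (a i) (unplus u)) ^+ 2
                - cmod (cinner (a i) xnat) ^+ 2) ^+ 2.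

Definition hessian N (g : 'rV[R]_N -> R) (u : 'rV[R]_N) : 'M[R]_N :=
  \matrix_(j < N, k < N) 'D_(delta_mx ord0 j) ('D_(delta_mx ord0 k) g) u.

Definition qform N (H : 'M[R]_N) (v : 'rV[R]_N) : R := (v *m H *m v^T) ord0 ord0.

Definition tensor4 N := 'I_N -> 'I_N -> 'I_N -> 'I_N -> R.

Definition tensorT n m (sigma : R) (a : 'I_m -> 'I_n -> R[i]) : tensor4 (n + n) :=
  fun i1 i2 i3 i4 => (m%:R * sigma ^+ 4)^-1 *
    \sum_(i < m) (vplus (a i) ord0 i1 * vplus (a i) ord0 i2 *
                  vplus (a i) ord0 i3 * vplus (a i) ord0 i4).

Definition tensorS N : tensor4 N :=
  fun i1 i2 i3 i4 =>
    ((i1 == i2) && (i3 == i4))%:R + ((i1 == i3) && (i2 == i4))%:R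
    + ((i1 == i4) && (i2 == i3))%:R.

Definition tsub N (A B : tensor4 N) : tensor4 N :=
  fun i1 i2 i3 i4 => A i1 i2 i3 i4 - B i1 i2 i3 i4.

Definition tinner N (A : tensor4 N) (u1 u2 u3 u4 : 'rV[R]_N) : R :=
  \sum_(i1 < N) \sum_(i2 < N) \sum_(i3 < N) \sum_(i4 < N)
    A i1 i2 i3 i4 * u1 ord0 i1 * u2 ord0 i2 * u3 ord0 i3 * u4 ord0 i4.

Definition rnorm N (u : 'rV[R]_N) : R := Num.sqrt (\sum_(k < N) u ord0 k ^+ 2).

Definition opnorm N (A : tensor4 N) : R :=
  sup [set r : R | exists u1 u2 u3 u4 : 'rV[R]_N,
         rnorm u1 * rnorm u2 * rnorm u3 * rnorm u4 = 1 /\ r = tinner A u1 u2 u3 u4].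

End PhaseRetrieval.

(* In real coordinates u = x^+ and v = x^natural+, with J the multiplication by
   i, the Hessian form of f at u in the direction v is a fixed combination of the
   fourth moments sum_i prod_k <a_i^+, w_k>, w_k in {u, v, J u, J v}.  These
   moments are m sigma^4 times the multilinear form of T = S + (T - S).  The
   S part equals 32 |u|^2 |v|^2 + 64 <u, v>^2 - 32 |v|^4 (the <u, J v> terms
   cancel), and the T - S part is at most ||T - S||_op (48 |u|^2 |v|^2 + 16 |v|^4);
   with C2 = 24 the hypothesis makes the sum negative. *)

From mathcomp Require Import all_boot all_order all_algebra.
From mathcomp Require Import all_classical all_reals all_analysis.
From mathcomp Require Import complex.
From mathcomp Require Import ring lra.
Set Implicit Arguments.
Unset Strict Implicit.
Unset Printing Implicit Defensive.
Import Order.TTheory GRing.Theory Num.Theory.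
Import numFieldNormedType.Exports.
Local Open Scope ring_scope.

Section Dot.
Local Open Scope classical_set_scope.
Variables (R : realType) (N : nat).
Implicit Types c u v w : 'rV[R]_N.

Definition dot c u : R := \sum_(k < N) c ord0 k * u ord0 k.

Lemma dotC c u : dot c u = dot u c.
Proof. by apply: eq_bigr => k _; rewrite mulrC. Qed.

Lemma dotDr c u v : dot c (u + v) = dot c u + dot c v.
Proof. by rewrite /dot -big_split; apply: eq_bigr => k _; rewrite mxE mulrDr. Qed.

Lemma dotZr c (h : R) u : dot c (h *: u) = h * dot c u.
Proof. by rewrite /dot mulr_sumr; apply: eq_bigr => k _; rewrite mxE mulrCA. Qed.

Lemma is_derive_dot c x v : is_derive x v (dot c) (dot c v).
Proof.
have quot : (fun h : R => h^-1 *: ((dot c \o shift x) (h *: v) - dot c x))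
    = (fun h => h^-1 * h * dot c v).
  by apply/funext => h /=; rewrite dotDr dotZr addrK; exact: mulrA.
have lim_quot : (fun h : R => h^-1 * h * dot c v) @ 0^' --> dot c v.
  apply: cvg_near_cst; near=> h; rewrite mulVf ?mul1r //.
  by near: h; exact: nbhs_dnbhs_neq.
split; first by rewrite /derivable quot; apply/cvg_ex; exists (dot c v).
by rewrite /derive quot; exact: cvg_lim.
Unshelve. all: by end_near.
Qed.

Lemma rnormE w : rnorm w = Num.sqrt (dot w w).
Proof. by congr Num.sqrt; apply: eq_bigr => k _; rewrite expr2. Qed.

Lemma rnorm_ge0 w : 0 <= rnorm w.
Proof. exact: sqrtr_ge0. Qed.

Lemma rnorm_sqr w : rnorm w ^+ 2 = dot w w.
Proof.
by rewrite rnormE sqr_sqrtr // sumr_ge0 // => k _; rewrite -expr2 sqr_ge0.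
Qed.

Lemma rnormZ (h : R) w : rnorm (h *: w) = `|h| * rnorm w.
Proof.
rewrite /rnorm -sqrtr_sqr -sqrtrM ?sqr_ge0 // mulr_sumr; congr Num.sqrt.
by apply: eq_bigr => k _; rewrite mxE exprMn.
Qed.

Lemma abs_coord_le_rnorm w k : `|w ord0 k| <= rnorm w.
Proof.
rewrite -sqrtr_sqr ler_wsqrtr // (bigD1 k) //= lerDl.
by apply: sumr_ge0 => j _; rewrite sqr_ge0.
Qed.

Lemma rnorm_eq0 w : rnorm w = 0 -> w = 0.
Proof.
move=> w0; apply/rowP => k; rewrite mxE; apply/eqP.
by rewrite -normr_le0 -w0 abs_coord_le_rnorm.
Qed.

Lemma sum_coord_linear (L : 'rV[R]_N -> R) v :
  (forall h p q, L (h *: p + q) = h * L p + L q) ->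
  \sum_j v ord0 j * L (delta_mx ord0 j) = L v.
Proof.
move=> linL; have L0 : L 0 = 0 by have := linL 1 0 0; rewrite scale1r addr0; lra.
rewrite [in RHS](row_sum_delta v).
by elim/big_rec2: _ => [|j s p _ ->]; rewrite ?L0 ?linL.
Qed.

Lemma qform_bilinear (F : 'rV[R]_N -> 'rV[R]_N -> R) v :
  (forall h p1 p2 q, F (h *: p1 + p2) q = h * F p1 q + F p2 q) ->
  (forall h p q1 q2, F p (h *: q1 + q2) = h * F p q1 + F p q2) ->
  qform (\matrix_(j, k) F (delta_mx ord0 j) (delta_mx ord0 k)) v = F v v.
Proof.
move=> linF1 linF2; rewrite /qform mxE.
under eq_bigr => k _ do rewrite !mxE.
under eq_bigr => k _ do under eq_bigr => j _ do rewrite mxE.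
transitivity (\sum_k F v (delta_mx ord0 k) * v ord0 k).
  by apply: eq_bigr => k _; rewrite (sum_coord_linear (L := fun p => F p (delta_mx ord0 k))).
by rewrite -(sum_coord_linear (L := F v)) //; apply: eq_bigr => k _; rewrite mulrC.
Qed.

End Dot.

Section Residual.
Variables (R : realType) (V : normedModType R) (A B : V -> R) (y : R).
Hypotheses (dA : forall x v, is_derive x v A (A v))
           (dB : forall x v, is_derive x v B (B v)).

Definition resid w := A w ^+ 2 + B w ^+ 2 - y.

Lemma is_derive_resid x q :
  is_derive x q resid (2 * (A x * A q + B x * B q)).
Proof.
have -> : resid = A * A + B * B - cst y by [].
have d := is_deriveB (is_deriveD (is_deriveM (dA x q) (dA x q))
  (is_deriveM (dB x q) (dB x q))) (is_derive_cst y x q).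
apply: (is_derive_eq d).
by rewrite /GRing.scale /=; ring.
Qed.

Lemma is_derive_resid_sqr x q :
  is_derive x q (fun w => resid w ^+ 2) (4 * resid x * (A x * A q + B x * B q)).
Proof.
have -> : (fun w => resid w ^+ 2) = resid * resid by [].
have dres := is_derive_resid x q.
apply: (is_derive_eq (is_deriveM dres dres)).
by rewrite /GRing.scale /=; ring.
Qed.

Lemma is_derive2_resid_sqr u p q :
  is_derive u p (fun w => 4 * resid w * (A w * A q + B w * B q))
    (8 * (A u * A p + B u * B p) * (A u * A q + B u * B q)
     + 4 * resid u * (A p * A q + B p * B q)).
Proof.
have -> : (fun w => 4 * resid w * (A w * A q + B w * B q))
    = cst 4 * resid * (A * cst (A q) + B * cst (B q)) by [].
have dlin := is_deriveD (is_deriveM (dA u p) (is_derive_cst (A q) u p))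
  (is_deriveM (dB u p) (is_derive_cst (B q) u p)).
have d := is_deriveM (is_deriveM (is_derive_cst (4 : R) u p) (is_derive_resid u p)) dlin.
apply: (is_derive_eq d).
by rewrite /GRing.scale /= !fctE; ring.
Qed.

End Residual.

Lemma split_lshift m n (j : 'I_m) : fintype.split (lshift n j) = inl j.
Proof. exact: (unsplitK (inl j)). Qed.

Lemma split_rshift m n (j : 'I_n) : fintype.split (rshift m j) = inr j.
Proof. exact: (unsplitK (inr j)). Qed.

Lemma Re_sum (R : realType) n (F : 'I_n -> R[i]) :
  complex.Re (\sum_(j < n) F j) = \sum_(j < n) complex.Re (F j).
Proof. by apply: (big_morph (@complex.Re R)) => // [[? ?] [? ?]]. Qed.

Lemma Im_sum (R : realType) n (F : 'I_n -> R[i]) :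
  complex.Im (\sum_(j < n) F j) = \sum_(j < n) complex.Im (F j).
Proof. by apply: (big_morph (@complex.Im R)) => // [[? ?] [? ?]]. Qed.

Lemma cmod_sqr (R : realType) (z : R[i]) :
  cmod z ^+ 2 = complex.Re z ^+ 2 + complex.Im z ^+ 2.
Proof. by case: z => x y; rewrite /cmod /= sqr_sqrtr // addr_ge0 ?sqr_ge0. Qed.

Section ComplexCoordinates.
Variables (R : realType) (n : nat).
Local Notation N := (n + n)%N.
Implicit Types (c u v w : 'rV[R]_N) (x : 'I_n -> R[i]).

(* Multiplication by the imaginary unit in real coordinates: [mulJ (vplus x)] is
   the vector [x^-] of the paper. *)
Definition mulJ w : 'rV[R]_N :=
  \row_(k < N) match fintype.split k with
               | inl j => - w ord0 (rshift n j)
               | inr j => w ord0 (lshift n j) end.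

Lemma dot_split c u : dot c u = \sum_(j < n)
  (c ord0 (lshift n j) * u ord0 (lshift n j) + c ord0 (rshift n j) * u ord0 (rshift n j)).
Proof. by rewrite /dot big_split_ord /= -big_split. Qed.

Lemma unplusK : cancel (@vplus R n) (@unplus R n).
Proof.
move=> x; apply/funext => j.
by rewrite /unplus !mxE split_lshift split_rshift; case: (x j).
Qed.

Lemma Re_cinner x w : complex.Re (cinner x (unplus w)) = dot (vplus x) w.
Proof.
rewrite /cinner Re_sum dot_split; apply: eq_bigr => j _.
by rewrite !mxE split_lshift split_rshift; case: (x j) => ? ? /=; ring.
Qed.

Lemma Im_cinner x w : complex.Im (cinner x (unplus w)) = dot (vplus x) (mulJ w).
Proof.
rewrite /cinner Im_sum dot_split; apply: eq_bigr => j _.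
by rewrite !mxE !split_lshift !split_rshift; case: (x j) => ? ? /=; ring.
Qed.

Lemma cmod_cinner x w :
  cmod (cinner x (unplus w)) ^+ 2 = dot (vplus x) w ^+ 2 + dot (vplus x) (mulJ w) ^+ 2.
Proof. by rewrite cmod_sqr Re_cinner Im_cinner. Qed.

Lemma rnorm_vplus x : rnorm (vplus x) = cnorm x.
Proof.
rewrite /rnorm /cnorm big_split_ord /= -big_split; congr Num.sqrt.
by apply: eq_bigr => j _; rewrite cmod_sqr !mxE split_lshift split_rshift.
Qed.

Lemma cnorm_gt0 x : x <> (fun=> 0) -> 0 < cnorm x.
Proof.
move=> x_neq0; rewrite -rnorm_vplus lt0r rnorm_ge0 andbT.
apply/eqP => /rnorm_eq0 x0; apply: x_neq0; rewrite -[x]unplusK x0.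
by apply/funext => j; rewrite /unplus !mxE.
Qed.

Lemma dot_mulJr c u : dot c (mulJ u) = - dot (mulJ c) u.
Proof.
rewrite !dot_split -sumrN; apply: eq_bigr => j _.
by rewrite !mxE !split_lshift !split_rshift; ring.
Qed.

Lemma dot_mulJ c u : dot (mulJ c) (mulJ u) = dot c u.
Proof.
rewrite !dot_split; apply: eq_bigr => j _.
by rewrite !mxE !split_lshift !split_rshift; ring.
Qed.

Lemma dot_mulJl c u : dot (mulJ c) u = - dot c (mulJ u).
Proof. by rewrite dot_mulJr opprK. Qed.

Lemma dot_mulJ_id u : dot u (mulJ u) = 0.
Proof. by have := dot_mulJr u u; rewrite [dot (mulJ u) u]dotC; lra. Qed.

Lemma rnorm_mulJ w : rnorm (mulJ w) = rnorm w.
Proof. by rewrite !rnormE dot_mulJ. Qed.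

End ComplexCoordinates.

Section Tensor.
Variables (R : realType) (N : nat).
Implicit Types (A F G : tensor4 R N).

Lemma tinner_sum m (F : 'I_m -> tensor4 R N) (w1 w2 w3 w4 : 'rV[R]_N) :
  tinner (fun i1 i2 i3 i4 => \sum_(i < m) F i i1 i2 i3 i4) w1 w2 w3 w4
  = \sum_(i < m) tinner (F i) w1 w2 w3 w4.
Proof.
rewrite /tinner [RHS]exchange_big; apply: eq_bigr => i1 _.
rewrite [RHS]exchange_big; apply: eq_bigr => i2 _.
rewrite [RHS]exchange_big; apply: eq_bigr => i3 _.
rewrite [RHS]exchange_big; apply: eq_bigr => i4 _.
by rewrite !mulr_suml.
Qed.

Lemma tinnerD F G (w1 w2 w3 w4 : 'rV[R]_N) :
  tinner (fun i1 i2 i3 i4 => F i1 i2 i3 i4 + G i1 i2 i3 i4) w1 w2 w3 w4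
  = tinner F w1 w2 w3 w4 + tinner G w1 w2 w3 w4.
Proof.
rewrite /tinner -big_split; apply: eq_bigr => i1 _.
rewrite -big_split; apply: eq_bigr => i2 _.
rewrite -big_split; apply: eq_bigr => i3 _.
by rewrite -big_split; apply: eq_bigr => i4 _; rewrite !mulrDl.
Qed.

Lemma tinnerB F G (w1 w2 w3 w4 : 'rV[R]_N) :
  tinner (tsub F G) w1 w2 w3 w4 = tinner F w1 w2 w3 w4 - tinner G w1 w2 w3 w4.
Proof.
rewrite /tinner -sumrB; apply: eq_bigr => i1 _.
rewrite -sumrB; apply: eq_bigr => i2 _.
rewrite -sumrB; apply: eq_bigr => i3 _.
by rewrite -sumrB; apply: eq_bigr => i4 _; rewrite !mulrBl.
Qed.

Lemma tinnerZl (h : R) F (w1 w2 w3 w4 : 'rV[R]_N) :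
  tinner (fun i1 i2 i3 i4 => h * F i1 i2 i3 i4) w1 w2 w3 w4 = h * tinner F w1 w2 w3 w4.
Proof.
rewrite /tinner mulr_sumr; apply: eq_bigr => i1 _.
rewrite mulr_sumr; apply: eq_bigr => i2 _.
rewrite mulr_sumr; apply: eq_bigr => i3 _.
by rewrite mulr_sumr; apply: eq_bigr => i4 _; rewrite !mulrA.
Qed.

Lemma tinnerZr (h1 h2 h3 h4 : R) A (w1 w2 w3 w4 : 'rV[R]_N) :
  tinner A (h1 *: w1) (h2 *: w2) (h3 *: w3) (h4 *: w4)
  = h1 * h2 * h3 * h4 * tinner A w1 w2 w3 w4.
Proof.
rewrite /tinner mulr_sumr; apply: eq_bigr => i1 _.
rewrite mulr_sumr; apply: eq_bigr => i2 _.
rewrite mulr_sumr; apply: eq_bigr => i3 _.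
by rewrite mulr_sumr; apply: eq_bigr => i4 _; rewrite !mxE; ring.
Qed.

Lemma mulr_sum4 (F1 F2 F3 F4 : 'I_N -> R) :
  (\sum_i F1 i) * (\sum_i F2 i) * (\sum_i F3 i) * (\sum_i F4 i)
  = \sum_i1 \sum_i2 \sum_i3 \sum_i4 F1 i1 * F2 i2 * F3 i3 * F4 i4.
Proof.
rewrite !mulr_suml; apply: eq_bigr => i1 _.
rewrite (mulr_sumr _ _ _ (F1 i1)) !mulr_suml; apply: eq_bigr => i2 _.
rewrite (mulr_sumr _ _ _ (F1 i1 * F2 i2)) !mulr_suml; apply: eq_bigr => i3 _.
by rewrite mulr_sumr.
Qed.

Lemma tinner_rank1 (p : 'rV[R]_N) (w1 w2 w3 w4 : 'rV[R]_N) :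
  tinner (fun i1 i2 i3 i4 => p ord0 i1 * p ord0 i2 * p ord0 i3 * p ord0 i4) w1 w2 w3 w4
  = dot p w1 * dot p w2 * dot p w3 * dot p w4.
Proof.
rewrite /dot mulr_sum4 /tinner; apply: eq_bigr => i1 _; apply: eq_bigr => i2 _.
by apply: eq_bigr => i3 _; apply: eq_bigr => i4 _; ring.
Qed.

Lemma sum_eq_delta (i : 'I_N) (F : 'I_N -> R) : \sum_j (i == j)%:R * F j = F i.
Proof.
rewrite (bigD1 i) //= eqxx mul1r big1 ?addr0 // => j /negbTE ji.
by rewrite eq_sym ji mul0r.
Qed.

Lemma tinner_eq12_eq34 (w1 w2 w3 w4 : 'rV[R]_N) :
  tinner (fun i1 i2 i3 i4 => ((i1 == i2) && (i3 == i4))%:R) w1 w2 w3 w4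
  = dot w1 w2 * dot w3 w4.
Proof.
rewrite /tinner /dot mulr_suml; apply: eq_bigr => i1 _.
transitivity (\sum_i2 (i1 == i2)%:R * (w2 ord0 i2 *
  \sum_i3 \sum_i4 (i3 == i4)%:R * (w1 ord0 i1 * w3 ord0 i3 * w4 ord0 i4))).
  apply: eq_bigr => i2 _; rewrite !mulr_sumr; apply: eq_bigr => i3 _.
  by rewrite !mulr_sumr; apply: eq_bigr => i4 _; rewrite -mulnb natrM; ring.
rewrite sum_eq_delta !mulr_sumr; apply: eq_bigr => i3 _.
by rewrite sum_eq_delta; ring.
Qed.

Lemma tinner_eq13_eq24 (w1 w2 w3 w4 : 'rV[R]_N) :
  tinner (fun i1 i2 i3 i4 => ((i1 == i3) && (i2 == i4))%:R) w1 w2 w3 w4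
  = dot w1 w3 * dot w2 w4.
Proof.
rewrite /tinner /dot mulr_suml; apply: eq_bigr => i1 _.
rewrite mulr_sumr; apply: eq_bigr => i2 _.
transitivity (\sum_i3 (i1 == i3)%:R * (w3 ord0 i3 *
  \sum_i4 (i2 == i4)%:R * (w1 ord0 i1 * w2 ord0 i2 * w4 ord0 i4))).
  apply: eq_bigr => i3 _; rewrite !mulr_sumr; apply: eq_bigr => i4 _.
  by rewrite -mulnb natrM; ring.
by rewrite !sum_eq_delta; ring.
Qed.

Lemma tinner_eq14_eq23 (w1 w2 w3 w4 : 'rV[R]_N) :
  tinner (fun i1 i2 i3 i4 => ((i1 == i4) && (i2 == i3))%:R) w1 w2 w3 w4
  = dot w1 w4 * dot w2 w3.
Proof.
rewrite /tinner /dot mulr_suml; apply: eq_bigr => i1 _.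
rewrite mulr_sumr; apply: eq_bigr => i2 _.
transitivity (\sum_i3 (i2 == i3)%:R * (w3 ord0 i3 *
  \sum_i4 (i1 == i4)%:R * (w1 ord0 i1 * w2 ord0 i2 * w4 ord0 i4))).
  apply: eq_bigr => i3 _; rewrite !mulr_sumr; apply: eq_bigr => i4 _.
  by rewrite -mulnb natrM; ring.
by rewrite !sum_eq_delta; ring.
Qed.

Lemma tinner_tensorS (w1 w2 w3 w4 : 'rV[R]_N) :
  tinner (@tensorS R N) w1 w2 w3 w4
  = dot w1 w2 * dot w3 w4 + dot w1 w3 * dot w2 w4 + dot w1 w4 * dot w2 w3.
Proof. by rewrite /tensorS !tinnerD tinner_eq12_eq34 tinner_eq13_eq24 tinner_eq14_eq23. Qed.

Lemma tinner_eq0 A (w1 w2 w3 w4 : 'rV[R]_N) :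
  rnorm w1 * rnorm w2 * rnorm w3 * rnorm w4 = 0 -> tinner A w1 w2 w3 w4 = 0.
Proof.
move=> /eqP; rewrite !mulf_eq0 -!orbA => /or4P w0.
have {}w0 : w1 = 0 \/ w2 = 0 \/ w3 = 0 \/ w4 = 0.
  by case: w0 => /eqP/rnorm_eq0; tauto.
rewrite /tinner; apply: big1 => i1 _; apply: big1 => i2 _; apply: big1 => i3 _.
by apply: big1 => i4 _; case: w0 => [|[|[]]] ->; rewrite mxE; ring.
Qed.

Lemma abs_tinner_le_sum A (w1 w2 w3 w4 : 'rV[R]_N) :
  `|tinner A w1 w2 w3 w4| <= (\sum_i1 \sum_i2 \sum_i3 \sum_i4 `|A i1 i2 i3 i4|)
                              * (rnorm w1 * rnorm w2 * rnorm w3 * rnorm w4).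
Proof.
rewrite /tinner.
apply: (le_trans (ler_norm_sum _ _ _)); rewrite mulr_suml; apply: ler_sum => i1 _.
apply: (le_trans (ler_norm_sum _ _ _)); rewrite mulr_suml; apply: ler_sum => i2 _.
apply: (le_trans (ler_norm_sum _ _ _)); rewrite mulr_suml; apply: ler_sum => i3 _.
apply: (le_trans (ler_norm_sum _ _ _)); rewrite mulr_suml; apply: ler_sum => i4 _.
rewrite !normrM !mulrA; do 4?[apply: ler_pM] => //;
  by rewrite ?mulr_ge0 ?normr_ge0 ?abs_coord_le_rnorm.
Qed.

Lemma tinner_le_opnorm A (w1 w2 w3 w4 : 'rV[R]_N) :
  tinner A w1 w2 w3 w4 <= opnorm A * (rnorm w1 * rnorm w2 * rnorm w3 * rnorm w4).
Proof.
set r := rnorm w1 * rnorm w2 * rnorm w3 * rnorm w4.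
have [r0|] := eqVneq r 0; first by rewrite tinner_eq0 // r0 mulr0.
rewrite !mulf_eq0 !negb_or => /andP[/andP[/andP[r1 r2] r3] r4].
pose unit_tinner := tinner A ((rnorm w1)^-1 *: w1) ((rnorm w2)^-1 *: w2)
                             ((rnorm w3)^-1 *: w3) ((rnorm w4)^-1 *: w4).
rewrite /opnorm; set S := (X in sup X).
have S_unit : S unit_tinner.
  do 4 eexists; split; last by reflexivity.
  by rewrite !rnormZ !ger0_norm ?invr_ge0 ?rnorm_ge0 // !mulVf ?mulr1.
(* [sup] is junk on sets that are not bounded above. *)
have S_sup : has_sup S.
  split; first by exists unit_tinner.
  exists (\sum_i1 \sum_i2 \sum_i3 \sum_i4 `|A i1 i2 i3 i4|).
  move=> _ [u1 [u2 [u3 [u4 [unit_u ->]]]]].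
  by rewrite (le_trans (ler_norm _)) // -[X in _ <= X]mulr1 -unit_u abs_tinner_le_sum.
have := sup_upper_bound S_sup S_unit.
rewrite /unit_tinner tinnerZr -!invfM -/r => le_op.
have r_gt0 : 0 < r by rewrite lt0r -/r ?mulf_neq0 ?mulr_ge0 ?rnorm_ge0.
by rewrite -ler_pdivrMr // mulrC.
Qed.

Lemma abs_tinner_le_opnorm A (w1 w2 w3 w4 : 'rV[R]_N) :
  `|tinner A w1 w2 w3 w4| <= opnorm A * (rnorm w1 * rnorm w2 * rnorm w3 * rnorm w4).
Proof.
rewrite ler_norml tinner_le_opnorm andbT lerNl.
have := tinner_le_opnorm A (-1 *: w1) (1 *: w2) (1 *: w3) (1 *: w4).
by rewrite tinnerZr !rnormZ normrN1 normr1 !mul1r !mulr1 mulN1r.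
Qed.

End Tensor.

Definition moment (R : realType) n m (a : 'I_m -> 'I_n -> R[i]) (w1 w2 w3 w4 : 'rV[R]_(n + n)) :=
  \sum_(i < m) dot (vplus (a i)) w1 * dot (vplus (a i)) w2
               * dot (vplus (a i)) w3 * dot (vplus (a i)) w4.

Lemma tinner_tensorT (R : realType) n m (sigma : R) (a : 'I_m -> 'I_n -> R[i])
    (w1 w2 w3 w4 : 'rV[R]_(n + n)) :
  tinner (tensorT sigma a) w1 w2 w3 w4 = (m%:R * sigma ^+ 4)^-1 * moment a w1 w2 w3 w4.
Proof.
rewrite /tensorT tinnerZl tinner_sum; congr (_ * _).
by apply: eq_bigr => i _; rewrite tinner_rank1.
Qed.

Section HessianForm.
Variables (R : realType) (n : nat).
Local Notation N := (n + n)%N.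
Implicit Types (u v : 'rV[R]_N) (Phi : 'rV[R]_N -> 'rV[R]_N -> 'rV[R]_N -> 'rV[R]_N -> R).

(* The Hessian form of [fobj] at [u] in the direction [v], written in terms of
   [Phi w1 w2 w3 w4 = \sum_i \prod_k <a_i^+, w_k>] when [v] is the signal. *)
Definition hess_form Phi u v :=
  12 * Phi u u v v + 16 * Phi u v (mulJ u) (mulJ v)
  + 12 * Phi (mulJ u) (mulJ u) (mulJ v) (mulJ v) + 4 * Phi u u (mulJ v) (mulJ v)
  + 4 * Phi (mulJ u) (mulJ u) v v - 4 * Phi v v v v - 8 * Phi v v (mulJ v) (mulJ v)
  - 4 * Phi (mulJ v) (mulJ v) (mulJ v) (mulJ v).

Lemma hess_form_moment m (sigma : R) (a : 'I_m -> 'I_n -> R[i]) u v :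
  0 < m%:R * sigma ^+ 4 ->
  hess_form (moment a) u v = m%:R * sigma ^+ 4 *
    (hess_form (tinner (@tensorS R N)) u v
     + hess_form (tinner (tsub (tensorT sigma a) (@tensorS R N))) u v).
Proof.
move=> c_gt0; have moment_tensor (w1 w2 w3 w4 : 'rV[R]_N) : moment a w1 w2 w3 w4
    = m%:R * sigma ^+ 4 * (tinner (@tensorS R N) w1 w2 w3 w4
                           + tinner (tsub (tensorT sigma a) (@tensorS R N)) w1 w2 w3 w4).
  by rewrite tinnerB addrC subrK tinner_tensorT mulrA mulfV ?mul1r ?gt_eqF.
by rewrite /hess_form !moment_tensor; ring.
Qed.

Lemma hess_form_tensorS u v :
  hess_form (tinner (@tensorS R N)) u v
  = 32 * (rnorm u ^+ 2 * rnorm v ^+ 2) + 64 * dot u v ^+ 2 - 32 * rnorm v ^+ 4.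
Proof.
have Juv : dot (mulJ u) v = - dot u (mulJ v) by rewrite dot_mulJl.
have vJu : dot v (mulJ u) = - dot u (mulJ v) by rewrite dotC Juv.
rewrite /hess_form !tinner_tensorS !dot_mulJ !dot_mulJ_id Juv vJu.
rewrite (exprM _ 2 2) !rnorm_sqr; ring.
Qed.

Lemma abs_hess_form_le Phi (K : R) u v :
  (forall w1 w2 w3 w4, `|Phi w1 w2 w3 w4| <= K * (rnorm w1 * rnorm w2 * rnorm w3 * rnorm w4)) ->
  `|hess_form Phi u v| <= K * (48 * (rnorm u ^+ 2 * rnorm v ^+ 2) + 16 * rnorm v ^+ 4).
Proof.
move=> le_Phi.
have bounds w1 w2 w3 w4 : - (K * (rnorm w1 * rnorm w2 * rnorm w3 * rnorm w4))
    <= Phi w1 w2 w3 w4 <= K * (rnorm w1 * rnorm w2 * rnorm w3 * rnorm w4).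
  by rewrite -ler_norml.
move: (bounds u u v v) (bounds u v (mulJ u) (mulJ v))
  (bounds (mulJ u) (mulJ u) (mulJ v) (mulJ v)) (bounds u u (mulJ v) (mulJ v))
  (bounds (mulJ u) (mulJ u) v v) (bounds v v v v) (bounds v v (mulJ v) (mulJ v))
  (bounds (mulJ v) (mulJ v) (mulJ v) (mulJ v)).
rewrite !rnorm_mulJ /hess_form ler_norml !expr2.
do 8 (case/andP=> ? ?).
by apply/andP; split; lra.
Qed.

Lemma hess_form_tensor_lt0 (E : tensor4 R N) u v (d : R) :
  0 < rnorm v -> 0 < d -> opnorm E < d ->
  8 * ((dot u v ^+ 2 + dot u (mulJ v) ^+ 2) / rnorm v ^+ 4)
    + (4 + d * 24 / 4) * (rnorm u ^+ 2 / rnorm v ^+ 2) <= 4 - d * 24 / 4 ->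
  hess_form (tinner (@tensorS R N)) u v + hess_form (tinner E) u v < 0.
Proof.
move=> v_gt0 d_gt0 opE hyp.
have := abs_hess_form_le u v (abs_tinner_le_opnorm E); rewrite ler_norml => /andP[_].
rewrite hess_form_tensorS; move: hyp.
set e := hess_form _ u v; set op := opnorm E in opE *.
set s := dot u v; set t := dot u (mulJ v); set ru := rnorm u; set rv := rnorm v in v_gt0 *.
move=> hyp le_e.
have {}hyp : 8 * (s ^+ 2 + t ^+ 2) + (4 + d * 24 / 4) * (ru ^+ 2 * rv ^+ 2)
             <= (4 - d * 24 / 4) * rv ^+ 4.
  rewrite -(ler_pM2r (exprn_gt0 4 v_gt0)) in hyp; apply: le_trans hyp.
  by rewrite le_eqVlt; apply/orP; left; apply/eqP; field; rewrite gt_eqF.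
(* Eight times [hyp] bounds the [S] part by [- 48 d (ru^2 rv^2 + rv^4) - 64 t^2],
   which beats [e <= op (48 ru^2 rv^2 + 16 rv^4)] since [op < d]. *)
have : 0 <= (d - op) * (ru ^+ 2 * rv ^+ 2).
  by apply: mulr_ge0; [rewrite subr_ge0; exact: ltW | rewrite mulr_ge0 ?sqr_ge0].
have : 0 < (d - op) * rv ^+ 4 by rewrite mulr_gt0 ?subr_gt0 ?exprn_gt0.
have : 0 < d * rv ^+ 4 by rewrite mulr_gt0 ?exprn_gt0.
have : 0 <= t ^+ 2 by rewrite sqr_ge0.
move: hyp le_e; rewrite !expr2; lra.
Qed.

End HessianForm.

Section FobjHessian.
Variables (R : realType) (n m : nat) (a : 'I_m -> 'I_n -> R[i]) (xnat : 'I_n -> R[i]).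
Local Notation N := (n + n)%N.
Implicit Types (u v p q : 'rV[R]_N).

Let re i w := dot (vplus (a i)) w.
Let im i w := dot (vplus (a i)) (mulJ w).
Let y i := cmod (cinner (a i) xnat) ^+ 2.
Let res i := resid (re i) (im i) (y i).

Let re_linear i h p q : re i (h *: p + q) = h * re i p + re i q.
Proof. by rewrite /re dotDr dotZr. Qed.

Let im_linear i h p q : im i (h *: p + q) = h * im i p + im i q.
Proof. by rewrite /im !dot_mulJr dotDr dotZr; ring. Qed.

Let is_derive_re i x v : is_derive x v (re i) (re i v).
Proof. exact: is_derive_dot. Qed.

Let is_derive_im i x v : is_derive x v (im i) (im i v).
Proof.
have -> : im i = - dot (mulJ (vplus (a i))) by apply/funext => w; rewrite /im dot_mulJr.
exact: is_deriveN (is_derive_dot _ _ _).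
Qed.

Lemma fobjE : fobj a xnat = \sum_(i < m) (fun w => res i w ^+ 2).
Proof.
by apply/funext => w; rewrite fct_sumE; apply: eq_bigr => i _; rewrite cmod_cinner.
Qed.

Definition fobj_d2 u p q := \sum_(i < m)
  (8 * (re i u * re i p + im i u * im i p) * (re i u * re i q + im i u * im i q)
   + 4 * res i u * (re i p * re i q + im i p * im i q)).

Lemma derive2_fobj u p q : 'D_p ('D_q (fobj a xnat)) u = fobj_d2 u p q.
Proof.
have -> : 'D_q (fobj a xnat)
    = \sum_(i < m) (fun w => 4 * res i w * (re i w * re i q + im i w * im i q)).
  apply/funext => w; rewrite fobjE [in RHS]fct_sumE.
  have d1 := is_derive_sum (fun i =>
    is_derive_resid_sqr (y i) (is_derive_re i) (is_derive_im i) w q).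
  by rewrite derive_val.
have d2 := is_derive_sum (fun i =>
  is_derive2_resid_sqr (y i) (is_derive_re i) (is_derive_im i) u p q).
by rewrite derive_val.
Qed.

Lemma qform_hessian_fobj u v : qform (hessian (fobj a xnat) u) v = fobj_d2 u v v.
Proof.
have -> : hessian (fobj a xnat) u
    = \matrix_(j, k) fobj_d2 u (delta_mx ord0 j) (delta_mx ord0 k).
  by apply/matrixP => j k; rewrite !mxE derive2_fobj.
apply: qform_bilinear => *; rewrite /fobj_d2 mulr_sumr -big_split.
  by apply: eq_bigr => i _ /=; rewrite !re_linear !im_linear; ring.
by apply: eq_bigr => i _ /=; rewrite !re_linear !im_linear; ring.
Qed.

Lemma qform_hessian_fobj_moment u :
  qform (hessian (fobj a xnat) u) (vplus xnat) = hess_form (moment a) u (vplus xnat).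
Proof.
rewrite qform_hessian_fobj /fobj_d2 /hess_form /moment !mulr_sumr -!big_split -!sumrB.
apply: eq_bigr => i _ /=.
by rewrite /res /resid /y -[xnat in cinner _ xnat]unplusK cmod_cinner /re /im; ring.
Qed.

End FobjHessian.

Theorem proposition6 :
  forall R : realType, exists C2 : R, 0 < C2 /\
  forall (n m : nat) (a : 'I_m -> 'I_n -> R[i]) (xnat : 'I_n -> R[i])
         (sigma delta0 : R) (x : 'I_n -> R[i]),
    (0 < n)%N -> (0 < m)%N -> xnat <> (fun=> 0) -> 0 < sigma -> 0 < delta0 ->
    opnorm (tsub (tensorT sigma a) (@tensorS R (n + n)%N)) < delta0 ->
    8 * (cmod (cinner x xnat) ^+ 2 / cnorm xnat ^+ 4)
      + (4 + delta0 * C2 / 4) * (cnorm x ^+ 2 / cnorm xnat ^+ 2)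
      <= 4 - delta0 * C2 / 4 ->
    qform (hessian (fobj a xnat) (vplus x)) (vplus xnat) < 0.
Proof.
move=> R; exists 24; split=> // n m a xnat sigma d x _ m_gt0 xnat_neq0 sigma_gt0 d_gt0 opE hyp.
have c_gt0 : 0 < m%:R * sigma ^+ 4 by rewrite mulr_gt0 ?exprn_gt0 ?ltr0n.
rewrite qform_hessian_fobj_moment (hess_form_moment _ _ _ c_gt0) pmulr_rlt0 //.
apply: (hess_form_tensor_lt0 (d := d)) => //; first by rewrite rnorm_vplus cnorm_gt0.
by rewrite !rnorm_vplus -cmod_cinner unplusK.
Qed.
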